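(* Every RAD-AG-groupoid $S$ is right distributive, i.e. $(ab)c=(ac)(bc)$ for all $a,b,c\in S$.
   Context: A groupoid is a set $S$ with a binary operation written as juxtaposition; $ab\cdot c$ means $(ab)c$. An AG-groupoid is a groupoid satisfying the left invertive law $(ab)c=(cb)a$ for all $a,b,c\in S$. An RAD-AG-groupoid (right abelian distributive AG-groupoid) is an AG-groupoid satisfying $(ab)c=(ca)(bc)$ for all $a,b,c\in S$. *)

Definition left_invertive {S : Type} (op : S -> S -> S) : Prop :=
  forall a b c : S, op (op a b) c = op (op c b) a.

Definition AG_groupoid {S : Type} (op : S -> S -> S) : Prop :=
  left_invertive op.

Definition RAD_AG_groupoid {S : Type} (op : S -> S -> S) : Prop :=
  AG_groupoid op /\
  forall a b c : S, op (op a b) c = op (op c a) (op b c).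

Definition right_distributive {S : Type} (op : S -> S -> S) : Prop :=
  forall a b c : S, op (op a b) c = op (op a c) (op b c).


(* Expanding (ab)c and (ac)(bc) with the RAD identity for the third factor bc
   gives ((bc)c)(a(bc)) and ((bc)a)(c(bc)) respectively, and three applications
   of the left invertive law carry the first into the second. *)

Section RightAbelianDistributive.

Variables (S : Type) (op : S -> S -> S).
Local Infix "·" := op (at level 40, left associativity).

Hypothesis invertive : left_invertive op.
Hypothesis rad : forall a b c : S, (a · b) · c = (c · a) · (b · c).

Lemma rad_invertive_right_distributive : right_distributive op.
Proof.
intros a b c.
transitivity (((b · c) · c) · (a · (b · c))).
{ rewrite rad; apply rad. }
transitivity (((b · c) · a) · (c · (b · c))).
{ rewrite invertive, (invertive a (b · c) c); apply invertive. }
symmetry; apply rad.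
Qed.

End RightAbelianDistributive.

Theorem mainTheorem6 (S : Type) (op : S -> S -> S) :
  RAD_AG_groupoid op -> right_distributive op.
Proof.
intros [invertive rad].
exact (rad_invertive_right_distributive S op invertive rad).
Qed.
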